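(* Let $N=M\ell$ with $\ell$ prime, and let $\beta:=\beta_\ell(M)_*:\mathrm{Div}^0_{\mathrm{cusp}}(X_0(N))(\mathbf{Q})\to\mathrm{Div}^0_{\mathrm{cusp}}(X_0(M))(\mathbf{Q})$ be the push-forward along the degeneracy map. Then $$\mathrm{Div}^0_{\mathrm{cusp}}(X_0(M))(\mathbf{Q})\big/\beta\big(\mathrm{Div}^0_{\mathrm{cusp}}(X_0(N))(\mathbf{Q})\big)\simeq(\mathbf{Z}/\ell\mathbf{Z})^k$$ for some integer $k\ge0$. Moreover, if $\ell^4\nmid N$ then $k=0$, and consequently $\beta_\ell(M)_*(\mathscr{C}(N))=\mathscr{C}(M)$.
   Context: $\beta_\ell(M):X_0(M\ell)\to X_0(M)$ is the degeneracy map induced by $\tau\mapsto\ell\tau$ on the upper half-plane (modularly, $(E,C)\mapsto(E/C[\ell],C/C[\ell])$). $\mathrm{Div}^0_{\mathrm{cusp}}(X_0(N))(\mathbf{Q})$ denotes the group of degree-$0$ divisors on $X_0(N)$ supported on cusps and fixed by $\mathrm{Gal}(\overline{\mathbf{Q}}/\mathbf{Q})$. $\mathscr{C}(N)\subset J_0(N)$ is the group of linear equivalence classes of such divisors (the rational cuspidal divisor class group). *)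

From HB Require Import structures.
From mathcomp Require Import all_boot all_order all_algebra.
Unset Printing Implicit Defensive.
Import Order.TTheory GRing.Theory Num.Theory.
Local Open Scope ring_scope.

(* Cusps of X_0(N) (N >= 1), via the classical parametrisation:
   every cusp is Gamma_0(N)-equivalent to a/d with d a positive divisor of N,
   gcd(a,d)=1, and a/d ~ a'/d iff a = a' mod g(d), g(d) := gcd(d, N/d).
   A cusp is encoded as the pair (d, u) with u = a mod g(d) a unit mod g(d). *)
Definition gN (N d : nat) : nat := gcdn d (N %/ d).

Definition cusp_pred (N : nat) (x : 'I_N.+1 * 'I_N.+1) : bool :=
  let d := nat_of_ord x.1 in let u := nat_of_ord x.2 in
  [&& (0 < d)%N, (d %| N)%N, (u < gN N d)%N & coprime u (gN N d)].

Definition cusp (N : nat) : finType := {x : 'I_N.+1 * 'I_N.+1 | cusp_pred N x}.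

Definition cusp_d {N : nat} (c : cusp N) : nat := nat_of_ord (val c).1.
Definition cusp_u {N : nat} (c : cusp N) : nat := nat_of_ord (val c).2.

Definition cdiv (N : nat) := {ffun cusp N -> int}.

Definition cdeg {N : nat} (D : cdiv N) : int := \sum_(c : cusp N) D c.

(* Galois action: sigma_k (k a unit mod N, i.e. zeta_N -> zeta_N^k) sends the
   cusp a/d to ka/d.  A divisor is defined over Q iff it is fixed by all sigma_k. *)
Definition rational_div {N : nat} (D : cdiv N) : Prop :=
  forall (k : nat) (c c' : cusp N), coprime k N ->
    cusp_d c' = cusp_d c ->
    cusp_u c' = ((k * cusp_u c) %% gN N (cusp_d c))%N ->
    D c' = D c.

Definition Div0Q {N : nat} (D : cdiv N) : Prop := cdeg D = 0 /\ rational_div D.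

(* The degeneracy map beta_l(M) : X_0(M l) -> X_0(M), tau |-> l tau, on cusps:
   a/d (d | Ml, a chosen prime to l) |-> l a / d, which reduces to
   a/(d/l) if l | d and to (l a)/d otherwise. *)
Definition beta_d (l d : nat) : nat := (d %/ gcdn d l)%N.
Definition beta_u (M l d u : nat) : nat :=
  ((l %/ gcdn d l) * u %% gN M (beta_d l d))%N.

Definition degen_push (M l : nat) {N : nat} (D : cdiv N) : cdiv M :=
  [ffun y : cusp M => \sum_(x : cusp N | (beta_d l (cusp_d x) == cusp_d y)
                          && (beta_u M l (cusp_d x) (cusp_u x) == cusp_u y)) D x].

From HB Require Import structures.
From mathcomp Require Import all_boot all_order all_algebra.
Import Order.TTheory GRing.Theory Num.Theory.
Local Open Scope ring_scope.

(* A rational cuspidal divisor on X_0(L) is constant on the cusps of a given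
   denominator d, so it is a function of d.  Over a cusp of X_0(M) of
   denominator d, the degeneracy map beta has, if l does not divide d, exactly
   one preimage of denominator d (the others have denominator l d, where a lift
   may be taken to vanish); if l divides d, its preimages all have denominator
   l d and there are g_N(l d) / g_M(d) of them, which is l when l g(d) divides
   M/d ("obstructed" d) and 1 otherwise.  Hence beta_* hits exactly the
   rational divisors of degree 0 whose values at obstructed denominators are
   divisible by l, and these values mod l identify the cokernel with F_l^k.
   An obstructed d has l | d and l^2 | M/d, so l^4 | N. *)

Section Arithmetic.
Local Open Scope nat_scope.

Lemma lift_coprime_mod {L g u} : 0 < L -> coprime u g ->
  exists2 k, coprime k L & k = u %[mod g].
Proof.
move=> L_gt0 cop_ug.
(* Every prime of L divides exactly one of u and g * t. *)
pose t := \prod_(p <- primes L | ~~ (p %| u)) p.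
have dvd_t q : prime q -> q %| L -> (q %| t) = ~~ (q %| u).
  move=> q_pr q_L; rewrite Euclid_dvd_prod // big_has_cond.
  apply/hasP/idP => [[p p_L /andP[/= p_u]] | q_u].
    by rewrite dvdn_prime2 // => [/eqP-> | ]; move: p_L; rewrite mem_primes => /and3P[].
  by exists q; rewrite ?mem_primes ?q_pr ?L_gt0 //= q_u dvdnn.
exists (u + g * t); last by rewrite addnC mulnC modnMDl.
have gcd_gt0 : 0 < gcdn (u + g * t) L by rewrite gcdn_gt0 L_gt0 orbT.
rewrite /coprime eqn_leq gcd_gt0 andbT leqNgt; apply/negP => /pdivP[q q_pr q_gcd].
have q_k := dvdn_trans q_gcd (dvdn_gcdl _ _).
have q_L := dvdn_trans q_gcd (dvdn_gcdr _ _).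
case q_u: (q %| u); move: q_k; last by rewrite dvdn_addl ?dvdn_mull ?dvd_t ?q_u.
have q_g : ~~ (q %| g).
  apply/negP => q_g; have : q %| gcdn u g by rewrite dvdn_gcd q_u q_g.
  by rewrite (eqP cop_ug) dvdn1 => /eqP q1; rewrite q1 in q_pr.
by rewrite dvdn_addr // Euclid_dvdM // dvd_t // q_u orbF (negbTE q_g).
Qed.

Lemma count_modn_iota n g r : r < g ->
  count (fun u => u %% g == r) (iota 0 (n * g)) = n.
Proof.
move=> r_lt; elim: n => [|n IHn]; first by rewrite mul0n.
rewrite mulSnr iotaD count_cat IHn add0n -[n * g]addn0 iotaDl count_map -addn1.
have <- : count_mem r (iota 0 g) = 1 by rewrite count_uniq_mem ?iota_uniq // mem_iota r_lt.
congr (_ + _).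
apply: eq_in_count => u; rewrite mem_iota add0n => /= u_lt.
by rewrite modnMDl modn_small.
Qed.

Lemma count_coprime_modn n g r : n %| g -> r < g -> coprime r g ->
  count (fun u => coprime u (n * g) && (u %% g == r)) (iota 0 (n * g)) = n.
Proof.
move=> dvd_ng r_lt cop_r; rewrite -[RHS](count_modn_iota n _ _ r_lt).
apply: eq_count => u /=; rewrite coprimeMr.
case: eqP => [r_def | _]; last by rewrite andbF.
have cop_u : coprime u g by rewrite -coprime_modl r_def.
by rewrite cop_u (coprime_dvdr dvd_ng cop_u).
Qed.

Lemma count_coprime_mul_modn l g r :
  0 < l -> coprime l g -> r < g -> coprime r g ->
  count (fun u => coprime u g && (l * u %% g == r)) (iota 0 g) = 1.
Proof.
move=> l_gt0 cop_l r_lt cop_r.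
have [l' k inv_l _] := egcdnP g l_gt0; rewrite (eqP cop_l) in inv_l.
have l'K x : l' * (l * x) = x %[mod g] by rewrite mulnA inv_l mulnDl mul1n mulnAC modnMDl.
have g_gt0 : 0 < g by apply: leq_ltn_trans r_lt.
have <- : count_mem (l' * r %% g) (iota 0 g) = 1.
  by rewrite count_uniq_mem ?iota_uniq // mem_iota ltn_pmod.
apply: eq_in_count => u; rewrite mem_iota add0n => /= u_lt.
have lK : l * (l' * r %% g) %% g = r by rewrite modnMmr mulnCA l'K modn_small.
apply/andP/eqP => [[_ /eqP <-] | ->]; first by rewrite modnMmr l'K modn_small.
split; last by rewrite lK.
by move: cop_r; rewrite -{1}lK coprime_modl coprimeMl => /andP[].
Qed.

Lemma gcdn_prime_mull l d m : prime l ->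
  gcdn (l * d) m = if l * gcdn d m %| m then l * gcdn d m else gcdn d m.
Proof.
move=> l_pr.
have dvd_gl : gcdn (l * d) m %| l * gcdn d m.
  by rewrite muln_gcdr dvdn_gcd dvdn_gcdl (dvdn_trans (dvdn_gcdr _ _)) ?dvdn_mull.
have dvd_g : gcdn d m %| gcdn (l * d) m.
  by rewrite dvdn_gcd dvdn_gcdr dvdn_mull ?dvdn_gcdl.
case: ifP => [dvd_lgm | ndvd_lgm].
  by apply/eqP; rewrite eqn_dvd dvd_gl dvdn_gcd dvdn_pmul2l ?prime_gt0 ?dvdn_gcdl.
have [q def_g] : exists q, gcdn (l * d) m = q * gcdn d m.
  by exists (gcdn (l * d) m %/ gcdn d m); rewrite divnK.
have m_gt0 : 0 < m by rewrite lt0n; apply: contraFneq _ ndvd_lgm => ->; apply: dvdn0.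
have g_gt0 : 0 < gcdn d m by rewrite gcdn_gt0 m_gt0 orbT.
have : q %| l by rewrite -(dvdn_pmul2r g_gt0) -def_g.
case/primeP: l_pr => _ /[apply] /orP[]/eqP q_def; first by rewrite def_g q_def mul1n.
by move: ndvd_lgm; rewrite -q_def -def_g dvdn_gcdr.
Qed.

Lemma gN_mulr_coprime m l d : d %| m -> coprime d l -> gN (m * l) d = gN m d.
Proof. by move=> dvd_dm cop_dl; rewrite /gN -divn_mulAC // Gauss_gcdl. Qed.

End Arithmetic.

Section Cusps.

Context {L : nat} (L_gt0 : (0 < L)%N).

Lemma cuspP (c : cusp L) :
  [/\ 0 < cusp_d c, cusp_d c %| L, cusp_u c < gN L (cusp_d c)
    & coprime (cusp_u c) (gN L (cusp_d c))]%N.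
Proof. by case: c => [[d u] cuspx]; rewrite /cusp_d /cusp_u /=; case/and4P: cuspx. Qed.

Lemma gN_gt0 {d} : (0 < d)%N -> (0 < gN L d)%N.
Proof. by move=> d_gt0; rewrite gcdn_gt0 d_gt0. Qed.

Lemma cusp_inj (c c' : cusp L) :
  cusp_d c = cusp_d c' -> cusp_u c = cusp_u c' -> c = c'.
Proof.
case: c c' => [[d u] ?] [[d' u'] ?] /= eq_d eq_u.
by apply: val_inj; congr pair; apply: val_inj.
Qed.

Lemma exists_cusp {d u} : (0 < d)%N -> (d %| L)%N -> (u < gN L d)%N ->
  coprime u (gN L d) -> exists c : cusp L, cusp_d c = d /\ cusp_u c = u.
Proof.
move=> d_gt0 dvd_dL u_lt cop_u.
have d_le : (d < L.+1)%N := dvdn_leq L_gt0 dvd_dL.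
have g_le : (gN L d <= L)%N := leq_trans (dvdn_leq d_gt0 (dvdn_gcdl _ _)) d_le.
have u_le : (u < L.+1)%N := ltnW (leq_trans u_lt g_le).
have cuspx : cusp_pred L (Ordinal d_le, Ordinal u_le) by apply/and4P.
by exists (exist (fun x => is_true (cusp_pred L x)) _ cuspx).
Qed.

Lemma exists_cusp1 {d} : (0 < d)%N -> (d %| L)%N ->
  exists c : cusp L, cusp_d c = d /\ cusp_u c = (1 %% gN L d)%N.
Proof.
move=> d_gt0 dvd_dL; apply: exists_cusp; rewrite ?ltn_pmod ?gN_gt0 //.
by rewrite coprime_modl coprime1n.
Qed.

Lemma cusp_d1_inj (c c' : cusp L) : cusp_d c = 1%N -> cusp_d c' = 1%N -> c = c'.
Proof.
have u0 (c0 : cusp L) : cusp_d c0 = 1%N -> cusp_u c0 = 0%N.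
  by have [_ _ + _] := cuspP c0 => /[swap] ->; rewrite /gN gcd1n ltnS leqn0 => /eqP.
by move=> c_d c'_d; apply: cusp_inj; rewrite ?u0 ?c_d ?c'_d.
Qed.

Lemma rational_div_eq (D : cdiv L) (c c' : cusp L) :
  rational_div D -> cusp_d c = cusp_d c' -> D c = D c'.
Proof.
move=> ratD.
suff eq_c1 (c0 c1 : cusp L) : cusp_d c0 = cusp_d c1 ->
    cusp_u c0 = (1 %% gN L (cusp_d c1))%N -> D c1 = D c0.
  move=> eq_d; have [d_gt0 dvd_dL _ _] := cuspP c.
  have [c0 [c0_d c0_u]] := exists_cusp1 d_gt0 dvd_dL.
  by rewrite (eq_c1 c0 c) ?(eq_c1 c0 c') -?eq_d.
move=> eq_d u_1; have [_ _ u_lt cop_u] := cuspP c1.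
have [k cop_k k_u] := lift_coprime_mod L_gt0 cop_u.
by apply: (ratD k); rewrite // eq_d u_1 modnMmr muln1 k_u modn_small.
Qed.

Definition cdiv_of_denom (h : nat -> int) : cdiv L := [ffun c => h (cusp_d c)].

(* The common value of a rational divisor on the cusps of denominator d, or 0
   if there is no such cusp. *)
Definition denom_val (D : cdiv L) (d : nat) : int :=
  if [pick c | cusp_d c == d] is Some c then D c else 0.

Lemma denom_valB (D D' : cdiv L) d :
  denom_val (D - D') d = denom_val D d - denom_val D' d.
Proof. by rewrite /denom_val; case: pickP => [c _ | _]; rewrite ?ffunE ?subr0. Qed.

Lemma denom_val_cdiv_of_denom h d : (0 < d)%N -> (d %| L)%N ->
  denom_val (cdiv_of_denom h) d = h d.
Proof.
move=> d_gt0 dvd_dL; rewrite /denom_val; case: pickP => [c /eqP c_d | no_c].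
  by rewrite ffunE c_d.
by have [c [c_d _]] := exists_cusp1 d_gt0 dvd_dL; move: (no_c c); rewrite /= c_d eqxx.
Qed.

Lemma rational_cdiv_of_denom h : rational_div (cdiv_of_denom h).
Proof. by move=> k c c' _ eq_d _; rewrite !ffunE eq_d. Qed.

Lemma cdiv_of_denom_val D : rational_div D -> D = cdiv_of_denom (denom_val D).
Proof.
move=> ratD; apply/ffunP => c; rewrite ffunE /denom_val.
case: pickP => [c' /eqP c'_d | /(_ c)]; last by rewrite eqxx.
exact: rational_div_eq.
Qed.

Lemma card_cusp_fiber d (P : pred nat) : (0 < d)%N -> (d %| L)%N ->
  #|[set c : cusp L | (cusp_d c == d) && P (cusp_u c)]|
  = count (fun u => coprime u (gN L d) && P u) (iota 0 (gN L d)).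
Proof.
move=> d_gt0 dvd_dL.
rewrite cardE -(size_map (@cusp_u L)) -size_filter; apply/perm_size/uniq_perm.
- rewrite map_inj_in_uniq ?enum_uniq // => c c'.
  rewrite !mem_enum !in_set => /andP[/eqP c_d _] /andP[/eqP c'_d _].
  by apply: cusp_inj; rewrite c_d c'_d.
- by rewrite filter_uniq ?iota_uniq.
move=> u; rewrite mem_filter mem_iota add0n.
apply/mapP/idP => [[c] | /andP[/andP[cop_u Pu] u_lt]].
  rewrite mem_enum inE => /andP[/eqP <- Pc] ->.
  by have [_ _ u_lt cop_u] := cuspP c; rewrite cop_u Pc u_lt.
have [c [c_d c_u]] := exists_cusp d_gt0 dvd_dL u_lt cop_u.
by exists c; rewrite // mem_enum inE c_d c_u eqxx.
Qed.

Lemma sum_cdiv_of_denom_fiber h d (P : pred nat) : (0 < d)%N -> (d %| L)%N ->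
  \sum_(c : cusp L | (cusp_d c == d) && P (cusp_u c)) cdiv_of_denom h c
  = h d *+ count (fun u => coprime u (gN L d) && P u) (iota 0 (gN L d)).
Proof.
move=> d_gt0 dvd_dL; rewrite -card_cusp_fiber // -sum1dep_card -sumrMnr.
by apply: eq_bigr => c /andP[/eqP c_d _]; rewrite ffunE c_d.
Qed.

Lemma exists_Div0Q_denom_val h :
  exists2 D : cdiv L, Div0Q D & forall d, (1 < d)%N -> (d %| L)%N -> denom_val D d = h d.
Proof.
have [c1 [c1_d _]] := @exists_cusp1 1 isT (dvd1n L).
have d1E c : (cusp_d c == 1%N) = (c == c1).
  by apply/eqP/eqP => [c_d | ->//]; apply: cusp_d1_inj.
pose h' d := h d - (if d == 1%N then cdeg (cdiv_of_denom h) else 0).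
exists (cdiv_of_denom h'); last first.
  move=> d d_gt1 dvd_dL.
  by rewrite denom_val_cdiv_of_denom ?(ltnW d_gt1) // /h' gtn_eqF ?subr0.
split; last exact: rational_cdiv_of_denom.
rewrite /cdeg; under eq_bigr => c _ do rewrite ffunE /h' d1E.
rewrite sumrB -big_mkcond big_pred1_eq /cdeg.
by under [X in _ - X]eq_bigr do rewrite ffunE; rewrite subrr.
Qed.

End Cusps.

Section Degeneracy.

Variables M l : nat.
Hypotheses (M_gt0 : (0 < M)%N) (l_prime : prime l).
Local Open Scope nat_scope.

Let l_gt0 : 0 < l := prime_gt0 l_prime.
Let Ml_gt0 : 0 < M * l. Proof. by rewrite muln_gt0 M_gt0 l_gt0. Qed.

(* For l | d, a cusp of X_0(M) of denominator d has l preimages under beta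
   if d is obstructed and a single one otherwise (see gN_mull_dvd). *)
Definition obstructed d := (l %| d) && (l * gN M d %| M %/ d).

Lemma coprime_of_ndvd {d} : ~~ (l %| d) -> coprime d l.
Proof. by rewrite coprime_sym prime_coprime. Qed.

Lemma beta_d_coprime d : ~~ (l %| d) -> beta_d l d = d.
Proof. by move/coprime_of_ndvd/eqP; rewrite /beta_d => ->; rewrite divn1. Qed.

Lemma beta_u_coprime d u : ~~ (l %| d) -> beta_u M l d u = l * u %% gN M d.
Proof.
by move=> l_d; rewrite /beta_u beta_d_coprime // (eqP (coprime_of_ndvd l_d)) divn1.
Qed.

Lemma beta_d_dvd d : l %| d -> beta_d l d = d %/ l.
Proof. by move=> l_d; rewrite /beta_d (gcdn_idPr l_d). Qed.

Lemma beta_u_dvd d u : l %| d -> beta_u M l d u = u %% gN M (d %/ l).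
Proof. by move=> l_d; rewrite /beta_u beta_d_dvd // (gcdn_idPr l_d) divnn l_gt0 mul1n. Qed.

Lemma beta_fiberE d u e r :
  (beta_d l d == e) && (beta_u M l d u == r)
  = if l %| d then (d == l * e) && (u %% gN M e == r)
    else (d == e) && (l * u %% gN M e == r).
Proof.
case: ifP => l_d; last by rewrite beta_d_coprime ?beta_u_coprime ?l_d //; case: eqP => // ->.
rewrite beta_d_dvd // beta_u_dvd //.
have [<- | ne] := eqVneq (d %/ l) e; first by rewrite mulnC divnK ?eqxx.
have [d_def | //] := eqVneq d (l * e).
by case/eqP: ne; rewrite d_def mulKn.
Qed.

Lemma gN_mull d : gN (M * l) (l * d) = gcdn (l * d) (M %/ d).
Proof. by rewrite /gN [M * l]mulnC divnMl. Qed.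

Lemma gN_mull_dvd d : l %| d ->
  gN (M * l) (l * d) = (if obstructed d then l else 1) * gN M d.
Proof.
move=> l_d; rewrite gN_mull gcdn_prime_mull // /obstructed l_d.
by case: ifP; rewrite ?mul1n.
Qed.

Lemma exists_beta_cusp (x : cusp (M * l)) :
  exists c : cusp M, cusp_d c = beta_d l (cusp_d x) /\
                     cusp_u c = beta_u M l (cusp_d x) (cusp_u x).
Proof.
have := cuspP x; move: (cusp_d x) (cusp_u x) => d u [d_gt0 d_Ml u_lt cop_u].
have [l_d | l_nd] := boolP (l %| d).
  rewrite beta_d_dvd // beta_u_dvd //; case/dvdnP: l_d d_gt0 d_Ml u_lt cop_u => e ->.
  rewrite mulnK // [e * l]mulnC muln_gt0 l_gt0 /= => e_gt0 e_Ml u_lt cop_u.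
  have e_M : e %| M by rewrite -(dvdn_pmul2r l_gt0) mulnC.
  have dvd_g : gN M e %| gN (M * l) (l * e).
    by rewrite gN_mull dvdn_gcd dvdn_gcdr (dvdn_trans (dvdn_gcdl _ _)) ?dvdn_mull.
  apply: exists_cusp; rewrite ?ltn_pmod ?gN_gt0 //.
  by rewrite coprime_modl (coprime_dvdr dvd_g).
rewrite beta_d_coprime // beta_u_coprime //.
have d_M : d %| M by rewrite -(Gauss_dvdl _ (coprime_of_ndvd l_nd)).
rewrite gN_mulr_coprime ?coprime_of_ndvd // in u_lt cop_u.
apply: exists_cusp; rewrite ?ltn_pmod ?gN_gt0 //.
rewrite coprime_modl coprimeMl cop_u andbT coprime_sym.
by rewrite (coprime_dvdl (dvdn_gcdl _ _)) ?coprime_of_ndvd.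
Qed.

Lemma cdeg_degen_push (y : cdiv (M * l)) : cdeg (degen_push M l y) = cdeg y.
Proof.
rewrite /cdeg; under eq_bigr => c _ do rewrite ffunE big_mkcond.
rewrite exchange_big /=; apply: eq_bigr => x _.
have [c [c_d c_u]] := exists_beta_cusp x.
rewrite -big_mkcond (big_pred1 c) // => c' /=.
rewrite -c_d -c_u; apply/andP/eqP => [[/eqP d_eq /eqP u_eq] | ->//].
exact: cusp_inj.
Qed.

Lemma degen_push_denom_dvd (h : nat -> int) (c : cusp M) : l %| cusp_d c ->
  degen_push M l (@cdiv_of_denom (M * l) h) c
  = (h (l * cusp_d c) *+ (if obstructed (cusp_d c) then l else 1))%R.
Proof.
move=> l_d; have [d_gt0 d_M u_lt cop_u] := cuspP c.
have ld_gt0 : 0 < l * cusp_d c by rewrite muln_gt0 l_gt0.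
have ld_Ml : l * cusp_d c %| M * l by rewrite mulnC dvdn_pmul2r.
rewrite ffunE (eq_bigl (fun x => (cusp_d x == l * cusp_d c)
                                 && (cusp_u x %% gN M (cusp_d c) == cusp_u c))).
  rewrite (sum_cdiv_of_denom_fiber _ _ _ (fun u => u %% gN M (cusp_d c) == cusp_u c)) //.
  rewrite gN_mull_dvd // count_coprime_modn //.
  case: ifP => // /andP[_ lg_dvd]; rewrite dvdn_gcd l_d.
  exact: dvdn_trans (dvdn_mulr _ _) lg_dvd.
move=> x; rewrite beta_fiberE; case: ifP => // l_nd.
have dx_neq e : l %| e -> (cusp_d x == e) = false.
  by move=> l_e; apply: contraFF l_nd => /eqP->.
by rewrite !dx_neq ?dvdn_mulr.
Qed.

Lemma degen_push_denom_coprime (h : nat -> int) (c : cusp M) :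
  ~~ (l %| cusp_d c) -> h (l * cusp_d c) = 0%R ->
  degen_push M l (@cdiv_of_denom (M * l) h) c = h (cusp_d c).
Proof.
move=> l_nd h_ld; have [d_gt0 d_M u_lt cop_u] := cuspP c.
pose P u := l * u %% gN M (cusp_d c) == cusp_u c.
rewrite ffunE; transitivity (\sum_(x | (cusp_d x == cusp_d c) && P (cusp_u x))
                                @cdiv_of_denom (M * l) h x)%R.
  rewrite [LHS]big_mkcond [RHS]big_mkcond; apply: eq_bigr => x _; rewrite beta_fiberE.
  have [l_dx | //] := boolP (l %| cusp_d x).
  have -> : (cusp_d x == cusp_d c) = false by apply: contraNF l_nd => /eqP <-.
  by rewrite ffunE; case: ifP => // /andP[/eqP-> _]; rewrite h_ld.
rewrite (sum_cdiv_of_denom_fiber _ _ _ P) ?dvdn_mulr //.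
rewrite gN_mulr_coprime ?coprime_of_ndvd // count_coprime_mul_modn ?mulr1n //.
by rewrite prime_coprime //; apply: contra l_nd => /dvdn_trans; apply; apply: dvdn_gcdl.
Qed.

Lemma dvd_degen_push_obstructed (y : cdiv (M * l)) (c : cusp M) :
  rational_div y -> obstructed (cusp_d c) -> (l %| degen_push M l y c)%Z.
Proof.
move=> rat_y /andP[l_d obs]; rewrite (cdiv_of_denom_val Ml_gt0 y rat_y).
rewrite degen_push_denom_dvd // /obstructed l_d obs /= -mulr_natr natz.
exact: dvdz_mull (dvdzz _).
Qed.

Lemma exists_degen_push_lift (x : cdiv M) : Div0Q x ->
  (forall c : cusp M, obstructed (cusp_d c) -> (l %| x c)%Z) ->
  exists2 y : cdiv (M * l), Div0Q y & x = degen_push M l y.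
Proof.
move=> [deg_x rat_x] dvd_x; pose X := denom_val x.
have xE c : x c = X (cusp_d c) by rewrite {1}(cdiv_of_denom_val M_gt0 x rat_x) ffunE.
pose h d := if ~~ (l %| d) then X d
            else if ~~ (l %| d %/ l) then 0%R
            else if obstructed (d %/ l) then (X (d %/ l)%N %/ l)%Z else X (d %/ l).
have push_h : degen_push M l (@cdiv_of_denom (M * l) h) = x.
  apply/ffunP => c; rewrite xE.
  have [l_d | l_nd] := boolP (l %| cusp_d c); last first.
    by rewrite degen_push_denom_coprime /h ?dvdn_mulr ?mulKn ?l_nd.
  rewrite degen_push_denom_dvd // /h dvdn_mulr // mulKn // l_d /=.
  case: ifP => obs //; rewrite -mulr_natr natz divzK // -xE.
  exact: dvd_x.
exists (cdiv_of_denom h); last by rewrite push_h.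
by split; [rewrite -cdeg_degen_push push_h | apply: rational_cdiv_of_denom].
Qed.

Lemma obstructed_expn4 d : d %| M -> obstructed d -> l ^ 4 %| M * l.
Proof.
move=> d_M /andP[l_d lg_dvd].
have l_g : l %| gN M d by rewrite dvdn_gcd l_d (dvdn_trans (dvdn_mulr _ _) lg_dvd).
have ll_dvd : l * l %| M %/ d by rewrite (dvdn_trans _ lg_dvd) ?dvdn_pmul2l.
rewrite expnS mulnC dvdn_pmul2r // -(divnK d_M) mulnC !expnS expn0 muln1.
exact: dvdn_mul l_d ll_dvd.
Qed.

End Degeneracy.

Section Obstruction.

Variables M l : nat.
Hypotheses (M_gt0 : (0 < M)%N) (l_prime : prime l).

Definition obstructed_denoms : {set 'I_M.+1} :=
  [set d : 'I_M.+1 | [&& 0 < d, d %| M & obstructed M l d]%N].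

Definition obstruction (x : cdiv M) : 'rV['F_l]_#|obstructed_denoms| :=
  \row_(i < #|obstructed_denoms|) (denom_val x (enum_val i))%:~R.

Lemma obstructionB (x y : cdiv M) : obstruction (x - y) = obstruction x - obstruction y.
Proof. by apply/rowP => i; rewrite !mxE denom_valB mulrzBr. Qed.

Lemma obstruction_surj v : exists2 x : cdiv M, Div0Q x & obstruction x = v.
Proof.
pose h d := \sum_(i < #|obstructed_denoms| | enum_val i == d :> nat) (v 0 i : nat)%:Z.
have [x Dx xE] := exists_Div0Q_denom_val M_gt0 h.
exists x => //; apply/rowP => i; rewrite mxE.
have := enum_valP i; rewrite inE => /and3P[d_gt0 d_M /andP[l_d _]].
have d_gt1 : (1 < enum_val i)%N := leq_trans (prime_gt1 l_prime) (dvdn_leq d_gt0 l_d).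
rewrite xE // /h (big_pred1 i) => [|j /=]; first by rewrite -pmulrn natr_Zp.
by rewrite (inj_eq val_inj) (inj_eq enum_val_inj).
Qed.

Lemma obstruction_eq0P (x : cdiv M) : rational_div x ->
  obstruction x = 0 <-> forall c : cusp M, obstructed M l (cusp_d c) -> (l %| x c)%Z.
Proof.
move=> rat_x.
have xE c : x c = denom_val x (cusp_d c) by rewrite {1}(cdiv_of_denom_val M_gt0 x rat_x) ffunE.
have dvdE d : (l %| denom_val x d)%Z = ((denom_val x d)%:~R == 0 :> 'F_l).
  exact: dvdz_pcharf (pchar_Fp l_prime) _.
split => [x0 c obs | dvd_x].
  have [d_gt0 d_M _ _] := cuspP c.
  have d_in : (val c).1 \in obstructed_denoms by rewrite inE d_gt0 d_M.
  have := congr1 (fun r : 'rV_#|obstructed_denoms| => r 0 (enum_rank_in d_in (val c).1)) x0.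
  by rewrite !mxE enum_rankK_in // xE dvdE => ->.
apply/rowP => i; rewrite !mxE; apply/eqP; rewrite -dvdE.
have := enum_valP i; rewrite inE => /and3P[d_gt0 d_M obs].
have [c [c_d _]] := exists_cusp1 M_gt0 d_gt0 d_M.
by rewrite -c_d -xE dvd_x ?c_d.
Qed.

Lemma obstruction_eq0 (x : cdiv M) : Div0Q x ->
  obstruction x = 0 <-> exists2 y : cdiv (M * l), Div0Q y & x = degen_push M l y.
Proof.
move=> Dx; have [_ rat_x] := Dx.
apply: (iff_trans (obstruction_eq0P x rat_x)); split; first exact: exists_degen_push_lift.
by case=> y [_ rat_y] -> c; apply: dvd_degen_push_obstructed.
Qed.

End Obstruction.

Theorem lemma3p4 (M l N : nat) (hM : (0 < M)%N) (hl : prime l) (hN : N = (M * l)%N) :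
  exists (k : nat) (f : cdiv M -> 'rV['F_l]_k),
    [/\ (forall x y : cdiv M, Div0Q x -> Div0Q y -> f (x - y) = f x - f y),
        (forall v : 'rV['F_l]_k, exists2 x : cdiv M, Div0Q x & f x = v),
        (forall x : cdiv M, Div0Q x ->
           (f x = 0 <-> exists2 y : cdiv N, Div0Q y & x = degen_push M l y))
      & (~~ (l ^ 4 %| N)%N -> k = 0%N)].
Proof.
subst N; exists #|obstructed_denoms M l|, (obstruction M l); split.
- by move=> x y _ _; apply: obstructionB.
- exact: obstruction_surj.
- exact: obstruction_eq0.
- move=> l4_nd; apply/eqP; rewrite cards_eq0; apply/eqP/setP => d; rewrite inE in_set0.
  by apply: contraNF l4_nd => /and3P[_ d_M]; apply: obstructed_expn4.
Qed.
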